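(* Let $n\geq 1$ and let $x_1,\dots,x_n\in(0,\tfrac12]$ be not all equal. With $A_n,G_n,A'_n,G'_n$ and $I$ as in the context, put $R=\frac{\ln\frac{I(A'_n,G'_n)}{I(A_n,G_n)}}{\ln\sqrt{\frac{A'_nG'_n}{A_nG_n}}}$. Then $$\max\left\{\frac{{A'_n}^n-{G'_n}^n}{{A_n}^n-{G_n}^n}\left(\frac{A_nG_n}{A'_nG'_n}\right)^{\frac n2},\ \frac{A'_n-G'_n}{A_n-G_n}\left(\frac{A_nG_n}{A'_nG'_n}\right)^{\frac12}\right\}<\frac{\ln\frac{A'_n}{G'_n}}{\ln\frac{A_n}{G_n}}<\frac{A'_n-G'_n}{A_n-G_n}\,R<\min\left\{\frac{A'_n-G'_n}{A_n-G_n},\ R\right\}<1,$$ $$\frac{A'_n}{G'_n}<\left(\frac{A'_n}{G'_n}\right)^{1/R}<\left(\frac{A_n}{G_n}\right)^{\frac{A'_n-G'_n}{A_n-G_n}}<\frac{A_n}{G_n}<\left(\frac{A'_n}{G'_n}\right)^{\left(\frac{A'_nG'_n}{A_nG_n}\right)^{\frac n2}},$$ and $$\frac{{A'_n}^n-{G'_n}^n}{{A_n}^n-{G_n}^n}<\frac{(A'_nG'_n)^{\frac n2}\ln\frac{A'_n}{G'_n}}{(A_nG_n)^{\frac n2}\ln\frac{A_n}{G_n}}<\left(\frac{A'_nG'_n}{A_nG_n}\right)^{\frac n2}.$$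
   Context: $A_n=\frac1n\sum_{i=1}^n x_i$ and $G_n=\prod_{i=1}^n x_i^{1/n}$ are the arithmetic and geometric means of $x_1,\dots,x_n$; $A'_n=\frac1n\sum_{i=1}^n(1-x_i)$ and $G'_n=\prod_{i=1}^n(1-x_i)^{1/n}$ are the arithmetic and geometric means of $1-x_1,\dots,1-x_n$. For $u,v>0$ the identric mean is $I(u,v)=\frac{1}{e}\left(\frac{u^u}{v^v}\right)^{1/(u-v)}$ if $u\neq v$ and $I(u,u)=u$. *)

From Stdlib Require Export Reals.
Open Scope R_scope.

Fixpoint rsum (f : nat -> R) (n : nat) : R :=
  match n with O => 0 | S k => rsum f k + f k end.
Fixpoint rprod (f : nat -> R) (n : nat) : R :=
  match n with O => 1 | S k => rprod f k * f k end.

(* Arithmetic and geometric means of x_0, ..., x_{n-1} (paper: x_1..x_n). *)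
Definition AM (n : nat) (x : nat -> R) : R := / INR n * rsum x n.
Definition GM (n : nat) (x : nat -> R) : R :=
  rprod (fun i => Rpower (x i) (/ INR n)) n.

Definition AM' (n : nat) (x : nat -> R) : R := AM n (fun i => 1 - x i).
Definition GM' (n : nat) (x : nat -> R) : R := GM n (fun i => 1 - x i).

Definition identric (u v : R) : R :=
  if Req_EM_T u v then u
  else / exp 1 * Rpower (Rpower u u / Rpower v v) (/ (u - v)).

From Stdlib Require Import Reals Lra Lia Psatz.
From Coquelicot Require Import Coquelicot.
Open Scope R_scope.

(* Write A = e^(m+d), G = e^(m-d), A' = e^(m'+d'), G' = e^(m'-d').  Then
   A - G = 2 e^m sinh d, A^n - G^n = 2 e^(nm) sinh (nd), A/G = e^(2d), AG = e^(2m) and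
   ln I(A, G) = m - 1 + d coth d, so every quantity of the theorem is an elementary function
   of d' < d < m' - m and n.  Besides AM-GM, two inequalities between the means drive the
   argument: Alzer's additive Ky Fan inequality A' - G' < A - G, and its power analogue
   A^n - G^n <= A'^n - G'^n, proved by induction on n through a two-point inequality.
   The chains then follow from the monotonicity of sinh t / t and of t coth t. *)

Lemma mvt_is_derive (f df : R -> R) (a b : R) : a < b ->
  (forall c, a <= c <= b -> is_derive f c (df c)) ->
  exists c, a < c < b /\ f b - f a = df c * (b - a).
Proof.
  intros Hab Hd. destruct (MVT_cor2 f df a b Hab) as (c & Hfab & Hc).
  - intros c Hc. apply is_derive_Reals. auto.
  - exists c. auto.
Qed.

Lemma incr_of_derive_pos (f df : R -> R) (a b : R) : a < b ->
  (forall c, a <= c <= b -> is_derive f c (df c)) ->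
  (forall c, a < c < b -> 0 < df c) -> f a < f b.
Proof.
  intros Hab Hd Hpos. destruct (mvt_is_derive f df a b Hab Hd) as (c & Hc & E).
  specialize (Hpos c Hc). nra.
Qed.

Lemma min_of_derive_sign (f df : R -> R) (x0 x : R) :
  (forall c, Rmin x0 x <= c <= Rmax x0 x -> is_derive f c (df c)) ->
  (forall c, x < c < x0 -> df c <= 0) -> (forall c, x0 < c < x -> 0 <= df c) ->
  f x0 <= f x.
Proof.
  intros Hd Hneg Hpos. destruct (Rtotal_order x x0) as [Hlt | [-> | Hgt]].
  - destruct (mvt_is_derive f df x x0 Hlt) as (c & Hc & E).
    { intros c Hc. apply Hd. rewrite Rmin_right, Rmax_left by lra. auto. }
    specialize (Hneg c Hc). nra.
  - lra.
  - destruct (mvt_is_derive f df x0 x Hgt) as (c & Hc & E).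
    { intros c Hc. apply Hd. rewrite Rmin_left, Rmax_right by lra. auto. }
    specialize (Hpos c Hc). nra.
Qed.

Lemma strict_min_of_derive_sign (f df : R -> R) (x0 x : R) : x <> x0 ->
  (forall c, Rmin x0 x <= c <= Rmax x0 x -> is_derive f c (df c)) ->
  (forall c, x < c < x0 -> df c < 0) -> (forall c, x0 < c < x -> 0 < df c) ->
  f x0 < f x.
Proof.
  intros Hne Hd Hneg Hpos. destruct (Rtotal_order x x0) as [Hlt | [-> | Hgt]].
  - destruct (mvt_is_derive f df x x0 Hlt) as (c & Hc & E).
    { intros c Hc. apply Hd. rewrite Rmin_right, Rmax_left by lra. auto. }
    specialize (Hneg c Hc). nra.
  - contradiction.
  - apply (incr_of_derive_pos f df); auto.
    intros c Hc. apply Hd. rewrite Rmin_left, Rmax_right by lra. auto.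
Qed.

Lemma exp_le_exp x y : x <= y -> exp x <= exp y.
Proof. intros [H|H]; [left; apply exp_increasing; auto | subst; lra]. Qed.

Lemma exp_pow_INR u n : exp u ^ n = exp (INR n * u).
Proof. rewrite <- Rpower_pow by apply exp_pos. unfold Rpower. rewrite ln_exp, Rmult_comm. auto. Qed.

Lemma exp_shift a b : exp b = exp (b - a) * exp a.
Proof. rewrite <- exp_plus. f_equal. ring. Qed.

Lemma ln_le_ln_add a t : 0 < a -> 0 < t -> ln t <= ln a + (t / a - 1).
Proof.
  intros Ha Ht. pose proof (exp_ineq1_le (ln (t / a))) as H.
  rewrite exp_ln, ln_div in H by (try apply Rdiv_lt_0_compat; auto). lra.
Qed.

Lemma ln_lt_ln_add a t : 0 < a -> 0 < t -> t <> a -> ln t < ln a + (t / a - 1).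
Proof.
  intros Ha Ht Hne. assert (Hta : ln (t / a) <> 0).
  { intro E. apply Hne.
    assert (E1 : t / a = 1) by (rewrite <- (exp_ln (t / a)), E by (apply Rdiv_lt_0_compat; auto); apply exp_0).
    replace t with (t / a * a) by (field; lra). rewrite E1. ring. }
  pose proof (exp_ineq1 _ Hta) as H.
  rewrite exp_ln, ln_div in H by (try apply Rdiv_lt_0_compat; auto). lra.
Qed.

(** * Hyperbolic functions *)

Lemma sinh_pos t : 0 < t -> 0 < sinh t.
Proof. intros Ht. rewrite <- sinh_0. apply sinh_lt. auto. Qed.

Lemma cosh_gt_1 t : t <> 0 -> 1 < cosh t.
Proof.
  intros Ht. unfold cosh. rewrite exp_Ropp.
  assert (He : 0 < exp t) by apply exp_pos.
  assert (He1 : exp t <> 1) by (intro E; apply Ht, exp_inv; rewrite exp_0; auto).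
  apply (Rmult_lt_reg_r (2 * exp t)); [lra|].
  replace ((exp t + / exp t) / 2 * (2 * exp t)) with (exp t * exp t + 1) by (field; lra).
  assert (0 < Rsqr (exp t - 1)) by (apply Rsqr_pos_lt; lra).
  unfold Rsqr in *. nra.
Qed.

Lemma cosh_sq_sub_sinh_sq t : cosh t * cosh t - sinh t * sinh t = 1.
Proof.
  unfold cosh, sinh. rewrite exp_Ropp.
  assert (0 < exp t) by apply exp_pos. field. lra.
Qed.

Lemma exp_neg_cosh_sub_sinh t : exp (- t) = cosh t - sinh t.
Proof. unfold cosh, sinh. field. Qed.

Lemma id_lt_sinh t : 0 < t -> t < sinh t.
Proof.
  intros Ht. enough (0 - 0 < sinh t - t) by lra. rewrite <- sinh_0 at 1.
  apply (incr_of_derive_pos (fun u => sinh u - u) (fun u => cosh u - 1)); auto.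
  - intros c _. unfold sinh, cosh. auto_derive; auto. field.
  - intros c Hc. pose proof (cosh_gt_1 c). lra.
Qed.

Lemma sinh_lt_id_mul_cosh t : 0 < t -> sinh t < t * cosh t.
Proof.
  intros Ht. enough (0 * cosh 0 - sinh 0 < t * cosh t - sinh t) by (rewrite sinh_0 in *; lra).
  apply (incr_of_derive_pos (fun u => u * cosh u - sinh u) (fun u => u * sinh u)); auto.
  - intros c _. unfold sinh, cosh. auto_derive; auto. field.
  - intros c Hc. pose proof (sinh_pos c). nra.
Qed.

Lemma id_lt_sinh_mul_cosh t : 0 < t -> t < sinh t * cosh t.
Proof.
  intros Ht. pose proof (id_lt_sinh (2 * t)) as H.
  replace (sinh (2 * t)) with (2 * (sinh t * cosh t)) in H; [lra|].
  unfold sinh, cosh. replace (2 * t) with (t + t) by ring.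
  rewrite exp_plus, !exp_Ropp, exp_plus. assert (0 < exp t) by apply exp_pos. field. lra.
Qed.

Lemma sinh_ratio_lt s t : 0 < s < t -> sinh s / sinh t < s / t.
Proof.
  intros Hst.
  assert (Hmono : sinh s / s < sinh t / t).
  { apply (incr_of_derive_pos (fun u => sinh u / u) (fun u => (u * cosh u - sinh u) / (u * u))).
    - lra.
    - intros c Hc. unfold sinh, cosh. auto_derive; [lra|]. field. lra.
    - intros c Hc. pose proof (sinh_lt_id_mul_cosh c). apply Rdiv_lt_0_compat; nra. }
  pose proof (sinh_pos s). pose proof (sinh_pos t).
  apply (Rmult_lt_reg_r (sinh t * t / (s * t))); [apply Rdiv_lt_0_compat; nra|].
  replace (sinh s / sinh t * (sinh t * t / (s * t))) with (sinh s / s) by (field; lra).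
  replace (s / t * (sinh t * t / (s * t))) with (sinh t / t) by (field; lra). auto.
Qed.

Definition tcoth (t : R) : R := t * cosh t / sinh t.

Lemma tcoth_gt_1 t : 0 < t -> 1 < tcoth t.
Proof.
  intros Ht. unfold tcoth. pose proof (sinh_pos t Ht). pose proof (sinh_lt_id_mul_cosh t Ht).
  apply (Rmult_lt_reg_r (sinh t)); auto. field_simplify; lra.
Qed.

Lemma tcoth_lt s t : 0 < s < t -> tcoth s < tcoth t.
Proof.
  intros Hst.
  apply (incr_of_derive_pos tcoth (fun u => (sinh u * cosh u - u) / (sinh u * sinh u))); [lra| |].
  - intros c Hc. assert (Hs : 0 < sinh c) by (apply sinh_pos; lra).
    replace (sinh c * cosh c - c) with ((cosh c + c * sinh c) * sinh c - c * cosh c * cosh c)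
      by (pose proof (cosh_sq_sub_sinh_sq c); nra).
    unfold tcoth, sinh, cosh. unfold sinh in Hs. auto_derive; [lra|]. field. lra.
  - intros c Hc. pose proof (id_lt_sinh_mul_cosh c). pose proof (sinh_pos c).
    apply Rdiv_lt_0_compat; nra.
Qed.

Lemma tcoth_sub_1_le t : 0 < t -> tcoth t - 1 <= t - exp (- t) * sinh t.
Proof.
  intros Ht. rewrite exp_neg_cosh_sub_sinh. unfold tcoth.
  pose proof (sinh_pos t Ht) as Hs. pose proof (id_lt_sinh_mul_cosh t Ht).
  pose proof (cosh_sq_sub_sinh_sq t).
  assert (Hc : 0 < cosh t - sinh t) by (rewrite <- exp_neg_cosh_sub_sinh; apply exp_pos).
  apply (Rmult_le_reg_r (sinh t)); auto.
  replace ((t * cosh t / sinh t - 1) * sinh t) with (t * cosh t - sinh t) by (field; lra).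
  nra.
Qed.

Lemma log_ratio_lt (d d' D : R) : 0 < d' -> 0 < d <= D ->
  d' / d < exp D * sinh d' / sinh d * ((D + tcoth d' - tcoth d) / D).
Proof.
  intros Hd' Hd. set (w := exp (- d) * sinh d).
  assert (Hs : 0 < sinh d) by (apply sinh_pos; lra).
  assert (Hs' : 0 < sinh d') by (apply sinh_pos; lra).
  assert (Hw : 0 < w) by (apply Rmult_lt_0_compat; [apply exp_pos | auto]).
  assert (HwD : exp (- D) * sinh d <= w).
  { apply Rmult_le_compat_r; [lra|]. apply exp_le_exp. lra. }
  assert (Hkey : tcoth d - 1 <= d - w) by (apply tcoth_sub_1_le; lra).
  pose proof (tcoth_gt_1 d ltac:(lra)). pose proof (tcoth_gt_1 d' Hd').
  pose proof (id_lt_sinh d' Hd').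
  assert (Hmain : d' * (exp (- D) * sinh d) * D < d * sinh d' * (D + tcoth d' - tcoth d)).
  { assert (d * (tcoth d - 1) <= d * (d - w)) by (apply Rmult_le_compat_l; lra).
    assert (d * (d - w) <= D * (d - w)) by (apply Rmult_le_compat_r; lra).
    assert (d' * (exp (- D) * sinh d) * D <= sinh d' * w * D).
    { apply Rmult_le_compat_r; [lra|].
      apply Rmult_le_compat; [lra | pose proof (exp_pos (- D)); nra | lra | auto]. }
    assert (sinh d' * (w * D) <= sinh d' * (d * (D + 1 - tcoth d))) by (apply Rmult_le_compat_l; lra).
    assert (d * sinh d' * (D + 1 - tcoth d) < d * sinh d' * (D + tcoth d' - tcoth d))
      by (apply Rmult_lt_compat_l; [nra | lra]).
    nra. }
  pose proof (exp_pos D).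
  apply (Rmult_lt_reg_r (d * sinh d * D / exp D)).
  { apply Rdiv_lt_0_compat; [|auto]. assert (0 < d * sinh d) by nra. nra. }
  rewrite exp_Ropp in Hmain.
  replace (d' / d * (d * sinh d * D / exp D)) with (d' * (/ exp D * sinh d) * D) by (field; lra).
  replace (exp D * sinh d' / sinh d * ((D + tcoth d' - tcoth d) / D) * (d * sinh d * D / exp D))
    with (d * sinh d' * (D + tcoth d' - tcoth d)) by (field; lra).
  auto.
Qed.

(* With [N = n] and [D = m' - m], the quantities [L], [q], [R], [P] are ln(A'/G') / ln(A/G),
   (A' - G') / (A - G), [Rr] and (A'^n - G'^n) / (A^n - G^n); the hypotheses are Alzer's
   inequality and its power analogue. *)
Lemma hyperbolic_chains (N d d' D : R) : 0 < N -> 0 < d' -> d' < d -> d < D ->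
  exp D * sinh d' < sinh d ->
  sinh (N * d) <= exp (N * D) * sinh (N * d') ->
  let L := d' / d in
  let q := exp D * sinh d' / sinh d in
  let R := (D + tcoth d' - tcoth d) / D in
  let P := exp (N * D) * sinh (N * d') / sinh (N * d) in
  Rmax (P * exp (- (N * D))) (q * exp (- D)) < L
  /\ L < q * R
  /\ q * R < Rmin q R
  /\ Rmin q R < 1
  /\ exp (2 * d') < exp (1 / R * (2 * d'))
  /\ exp (1 / R * (2 * d')) < exp (q * (2 * d))
  /\ exp (q * (2 * d)) < exp (2 * d)
  /\ exp (2 * d) < exp (exp (N * D) * (2 * d'))
  /\ P < exp (N * D) * L
  /\ exp (N * D) * L < exp (N * D).
Proof.
  intros HN Hd' Hdd HdD Hq1 HP L q R P.
  assert (Hs : 0 < sinh d) by (apply sinh_pos; lra).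
  assert (HsN : 0 < sinh (N * d)) by (apply sinh_pos; nra).
  pose proof (exp_pos D) as HeD. pose proof (exp_pos (N * D)) as HeND.
  set (r := sinh (N * d') / sinh (N * d)).
  assert (EP : P = exp (N * D) * r) by (unfold P, r; field; lra).
  assert (HrL : r < L).
  { replace L with (N * d' / (N * d)) by (unfold L; field; lra). apply sinh_ratio_lt. nra. }
  assert (Hr : exp (- (N * D)) <= r).
  { rewrite exp_Ropp. apply (Rmult_le_reg_r (exp (N * D) * sinh (N * d))); [nra|].
    replace (/ exp (N * D) * (exp (N * D) * sinh (N * d))) with (sinh (N * d)) by (field; lra).
    unfold r. replace (sinh (N * d') / sinh (N * d) * (exp (N * D) * sinh (N * d)))
      with (exp (N * D) * sinh (N * d')) by (field; lra). auto. }
  assert (HL : 0 < L < 1).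
  { unfold L. split; [apply Rdiv_lt_0_compat; lra|]. apply (Rmult_lt_reg_r d); [lra|]. field_simplify; lra. }
  assert (Hq : 0 < q < 1).
  { unfold q. pose proof (sinh_pos d' Hd'). split; [apply Rdiv_lt_0_compat; nra|].
    apply (Rmult_lt_reg_r (sinh d)); auto. field_simplify; lra. }
  assert (HLqR : L < q * R) by (apply log_ratio_lt; lra).
  assert (HR : 0 < R < 1).
  { split; [destruct (Rle_or_lt R 0); nra|].
    unfold R. pose proof (tcoth_lt d' d ltac:(lra)). apply (Rmult_lt_reg_r D); [lra|]. field_simplify; lra. }
  split; [apply Rmax_lub_lt|].
  { replace (P * exp (- (N * D))) with r by (rewrite EP, exp_Ropp; field; lra). auto. }
  { replace (q * exp (- D)) with (sinh d' / sinh d) by (unfold q; rewrite exp_Ropp; field; lra).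
    apply sinh_ratio_lt. lra. }
  split; [exact HLqR|].
  split; [apply Rmin_glb_lt; nra|].
  split; [pose proof (Rmin_l q R); lra|].
  repeat split; try apply exp_increasing.
  - assert (1 < 1 / R) by (apply (Rmult_lt_reg_r R); [lra|]; field_simplify; lra). nra.
  - apply (Rmult_lt_reg_r (R / d)); [apply Rdiv_lt_0_compat; lra|].
    replace (1 / R * (2 * d') * (R / d)) with (2 * L) by (unfold L; field; lra).
    replace (q * (2 * d) * (R / d)) with (2 * (q * R)) by (field; lra). lra.
  - nra.
  - assert (Hcross : 1 * d < exp (N * D) * L * d).
    { apply Rmult_lt_compat_r; [lra|].
      replace 1 with (exp (N * D) * exp (- (N * D))) by (rewrite exp_Ropp; field; lra).
      apply Rmult_lt_compat_l; lra. }
    replace (exp (N * D) * L * d) with (exp (N * D) * d') in Hcross by (unfold L; field; lra). lra.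
  - rewrite EP. apply Rmult_lt_compat_l; auto.
  - nra.
Qed.

(** * Means *)

Lemma rsum_ext (f g : nat -> R) n : (forall i, (i < n)%nat -> f i = g i) -> rsum f n = rsum g n.
Proof. induction n as [|n IH]; simpl; intros H; auto. rewrite IH, H; auto. Qed.

Lemma rsum_plus (f g : nat -> R) n : rsum (fun i => f i + g i) n = rsum f n + rsum g n.
Proof. induction n as [|n IH]; simpl; [ring|]. rewrite IH. ring. Qed.

Lemma rsum_scal c (f : nat -> R) n : rsum (fun i => c * f i) n = c * rsum f n.
Proof. induction n as [|n IH]; simpl; [ring|]. rewrite IH. ring. Qed.

Lemma rsum_const c n : rsum (fun _ => c) n = INR n * c.
Proof. induction n as [|n IH]; simpl rsum; [simpl; ring|]. rewrite IH, S_INR. ring. Qed.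

Lemma rsum_le (f g : nat -> R) n : (forall i, (i < n)%nat -> f i <= g i) -> rsum f n <= rsum g n.
Proof.
  induction n as [|n IH]; simpl; intros H; [lra|].
  pose proof (H n ltac:(lia)). pose proof (IH ltac:(intros; apply H; lia)). lra.
Qed.

Lemma rsum_lt (f g : nat -> R) n : (forall i, (i < n)%nat -> f i <= g i) ->
  (exists i, (i < n)%nat /\ f i < g i) -> rsum f n < rsum g n.
Proof.
  induction n as [|n IH]; simpl; intros H [i [Hi Hlt]]; [lia|].
  destruct (Nat.eq_dec i n) as [->|Hne].
  - pose proof (rsum_le f g n ltac:(intros; apply H; lia)). lra.
  - pose proof (H n ltac:(lia)).
    assert (rsum f n < rsum g n) by (apply IH; [intros; apply H; lia | exists i; split; [lia | auto]]).
    lra.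
Qed.

Lemma rprod_eq_exp_rsum_ln (y : nat -> R) n : (forall i, (i < n)%nat -> 0 < y i) ->
  rprod y n = exp (rsum (fun i => ln (y i)) n).
Proof.
  induction n as [|n IH]; simpl; intros H; [rewrite exp_0; auto|].
  rewrite IH by (intros; apply H; lia). rewrite exp_plus, exp_ln by (apply H; lia). auto.
Qed.

Definition nonconst (n : nat) (y : nat -> R) : Prop :=
  exists i j, (i < n)%nat /\ (j < n)%nat /\ y i <> y j.

Lemma nonconst_ne n y c : nonconst n y -> exists k, (k < n)%nat /\ y k <> c.
Proof.
  intros (i & j & Hi & Hj & Hij).
  destruct (Req_dec (y i) c) as [E|]; [exists j; split; [auto | congruence] | exists i; auto].
Qed.

Lemma AM_ext n (f g : nat -> R) : (forall i, (i < n)%nat -> f i = g i) -> AM n f = AM n g.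
Proof. intros H. unfold AM. rewrite (rsum_ext f g n H). auto. Qed.

Lemma AM_plus n (f g : nat -> R) : AM n (fun i => f i + g i) = AM n f + AM n g.
Proof. unfold AM. rewrite rsum_plus. ring. Qed.

Lemma AM_scal n c (f : nat -> R) : AM n (fun i => c * f i) = c * AM n f.
Proof. unfold AM. rewrite rsum_scal. ring. Qed.

Lemma AM_const n c : (1 <= n)%nat -> AM n (fun _ => c) = c.
Proof.
  intros Hn. unfold AM. rewrite rsum_const.
  assert (1 <= INR n) by (apply (le_INR 1); auto). field. lra.
Qed.

Lemma AM_le n (f g : nat -> R) : (forall i, (i < n)%nat -> f i <= g i) -> AM n f <= AM n g.
Proof.
  intros H. unfold AM. apply Rmult_le_compat_l; [|apply rsum_le; auto].
  destruct n; [simpl; rewrite Rinv_0; lra|]. left. apply Rinv_0_lt_compat, lt_0_INR. lia.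
Qed.

Lemma AM_lt n (f g : nat -> R) : (forall i, (i < n)%nat -> f i <= g i) ->
  (exists i, (i < n)%nat /\ f i < g i) -> AM n f < AM n g.
Proof.
  intros H [i [Hi Hlt]]. unfold AM. apply Rmult_lt_compat_l.
  - apply Rinv_0_lt_compat, lt_0_INR. lia.
  - apply rsum_lt; eauto.
Qed.

Lemma AM_pos n (y : nat -> R) : (1 <= n)%nat -> (forall i, (i < n)%nat -> 0 < y i) -> 0 < AM n y.
Proof.
  intros Hn Hy. rewrite <- (AM_const n 0 Hn).
  apply AM_lt; [intros; left; auto | exists 0%nat; split; [lia | apply Hy; lia]].
Qed.

Lemma AM_S n (x : nat -> R) : (1 <= n)%nat -> AM (S n) x = (INR n * AM n x + x n) / (INR n + 1).
Proof.
  intros Hn. unfold AM. rewrite S_INR. simpl rsum.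
  assert (1 <= INR n) by (apply (le_INR 1); auto). field. lra.
Qed.

Lemma GM_eq_exp_AM_ln n (y : nat -> R) : GM n y = exp (AM n (fun i => ln (y i))).
Proof.
  unfold GM, AM. generalize (/ INR n) as c. intros c.
  induction n as [|n IH]; simpl; [rewrite Rmult_0_r, exp_0; auto|].
  rewrite IH. unfold Rpower. rewrite <- exp_plus. f_equal. ring.
Qed.

Lemma GM_pos n (y : nat -> R) : 0 < GM n y.
Proof. rewrite GM_eq_exp_AM_ln. apply exp_pos. Qed.

Lemma ln_GM n (y : nat -> R) : ln (GM n y) = AM n (fun i => ln (y i)).
Proof. rewrite GM_eq_exp_AM_ln. apply ln_exp. Qed.

Lemma AM_one_sub n (x : nat -> R) : (1 <= n)%nat -> AM n (fun i => 1 - x i) = 1 - AM n x.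
Proof.
  intros Hn. rewrite (AM_ext n _ (fun i => 1 + -1 * x i)) by (intros; ring).
  rewrite AM_plus, AM_scal, AM_const by auto. ring.
Qed.

Lemma rprod_eq_GM_pow n (y : nat -> R) : (1 <= n)%nat -> (forall i, (i < n)%nat -> 0 < y i) ->
  rprod y n = GM n y ^ n.
Proof.
  intros Hn Hy. rewrite rprod_eq_exp_rsum_ln, GM_eq_exp_AM_ln, exp_pow_INR by auto.
  assert (1 <= INR n) by (apply (le_INR 1); auto). unfold AM. f_equal. field. lra.
Qed.

Lemma AM_ln_le_ln_AM n (y : nat -> R) : (1 <= n)%nat -> (forall i, (i < n)%nat -> 0 < y i) ->
  AM n (fun i => ln (y i)) <= ln (AM n y).
Proof.
  intros Hn Hy. set (a := AM n y). assert (Ha : 0 < a) by (apply AM_pos; auto).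
  apply Rle_trans with (AM n (fun i => ln a + (/ a * y i + -1))).
  - apply AM_le. intros i Hi. pose proof (ln_le_ln_add a (y i) Ha (Hy i Hi)). unfold Rdiv in H. lra.
  - rewrite AM_plus, AM_plus, AM_scal, !AM_const by auto. fold a. field_simplify; lra.
Qed.

Lemma AM_ln_lt_ln_AM n (y : nat -> R) : (1 <= n)%nat -> (forall i, (i < n)%nat -> 0 < y i) ->
  nonconst n y -> AM n (fun i => ln (y i)) < ln (AM n y).
Proof.
  intros Hn Hy Hne. set (a := AM n y). assert (Ha : 0 < a) by (apply AM_pos; auto).
  apply Rlt_le_trans with (AM n (fun i => ln a + (/ a * y i + -1))).
  - apply AM_lt.
    + intros i Hi. pose proof (ln_le_ln_add a (y i) Ha (Hy i Hi)). unfold Rdiv in H. lra.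
    + destruct (nonconst_ne n y a Hne) as (k & Hk & Hka). exists k. split; auto.
      pose proof (ln_lt_ln_add a (y k) Ha (Hy k Hk) Hka). unfold Rdiv in H. lra.
  - rewrite AM_plus, AM_plus, AM_scal, !AM_const by auto. fold a. field_simplify; lra.
Qed.

Lemma GM_le_AM n (y : nat -> R) : (1 <= n)%nat -> (forall i, (i < n)%nat -> 0 < y i) ->
  GM n y <= AM n y.
Proof.
  intros Hn Hy. rewrite GM_eq_exp_AM_ln, <- (exp_ln (AM n y)) by (apply AM_pos; auto).
  apply exp_le_exp, AM_ln_le_ln_AM; auto.
Qed.

Lemma GM_lt_AM n (y : nat -> R) : (1 <= n)%nat -> (forall i, (i < n)%nat -> 0 < y i) ->
  nonconst n y -> GM n y < AM n y.
Proof.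
  intros Hn Hy Hne. rewrite GM_eq_exp_AM_ln, <- (exp_ln (AM n y)) by (apply AM_pos; auto).
  apply exp_increasing, AM_ln_lt_ln_AM; auto.
Qed.

(** * Alzer's additive Ky Fan inequality *)

(* [kyfan_phi x0] has derivative (x - x0)(1 - 2x) / (x (1 - x)), hence its minimum on (0, 1/2]
   at [x0]; averaging over the sample with [x0 = G / (G + G')] yields Alzer's inequality. *)
Definition kyfan_phi (x0 x : R) : R := 2 * x - x0 * ln x + (1 - x0) * ln (1 - x).

Lemma kyfan_phi_strict_min x0 x : 0 < x0 <= 1/2 -> 0 < x <= 1/2 -> x <> x0 ->
  kyfan_phi x0 x0 < kyfan_phi x0 x.
Proof.
  intros Hx0 Hx Hne.
  apply (strict_min_of_derive_sign (kyfan_phi x0) (fun c => (c - x0) * (1 - 2 * c) / (c * (1 - c)))); auto.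
  - intros c Hc. assert (0 < c < 1).
    { split; [apply Rlt_le_trans with (Rmin x0 x) | apply Rle_lt_trans with (Rmax x0 x)]; try lra.
      - apply Rmin_glb_lt; lra.
      - apply Rmax_lub_lt; lra. }
    unfold kyfan_phi. auto_derive; [lra|]. field. lra.
  - intros c Hc. apply Rdiv_neg_pos; [|nra]. assert (0 < 1 - 2 * c) by lra. nra.
  - intros c Hc. apply Rdiv_lt_0_compat; [|nra]. assert (0 < 1 - 2 * c) by lra. nra.
Qed.

Lemma kyfan_phi_min x0 x : 0 < x0 <= 1/2 -> 0 < x <= 1/2 -> kyfan_phi x0 x0 <= kyfan_phi x0 x.
Proof.
  intros Hx0 Hx. destruct (Req_dec x x0) as [->|Hne]; [lra|].
  left. apply kyfan_phi_strict_min; auto.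
Qed.

Lemma additive_ky_fan n (x : nat -> R) : (1 <= n)%nat ->
  (forall i, (i < n)%nat -> 0 < x i <= 1/2) -> nonconst n x -> GM n x < GM' n x ->
  AM' n x - GM' n x < AM n x - GM n x.
Proof.
  intros Hn Hx Hne Hpq. unfold AM', GM' in *. rewrite AM_one_sub by auto.
  set (a := AM n x). set (p := GM n x) in *. set (q := GM n (fun i => 1 - x i)) in *.
  assert (Hp : 0 < p) by apply GM_pos.
  set (x0 := p / (p + q)).
  assert (Hx0 : 0 < x0 < 1/2).
  { unfold x0. split; [apply Rdiv_lt_0_compat; lra|].
    apply (Rmult_lt_reg_r (p + q)); [lra|]. field_simplify; lra. }
  assert (Hmean : kyfan_phi x0 x0 < AM n (fun i => kyfan_phi x0 (x i))).
  { rewrite <- (AM_const n (kyfan_phi x0 x0) Hn). apply AM_lt.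
    - intros i Hi. apply kyfan_phi_min; [lra | auto].
    - destruct (nonconst_ne n x x0 Hne) as (k & Hk & Hkx0). exists k. split; auto.
      apply kyfan_phi_strict_min; [lra | auto | auto]. }
  assert (Hphi : AM n (fun i => kyfan_phi x0 (x i)) = 2 * a - x0 * ln p + (1 - x0) * ln q).
  { unfold kyfan_phi. rewrite (AM_ext n _ (fun i => 2 * x i + (- x0 * ln (x i) + (1 - x0) * ln (1 - x i))))
      by (intros; ring).
    rewrite !AM_plus, !AM_scal. unfold p, q. rewrite !ln_GM. fold a. ring. }
  assert (Hphi0 : kyfan_phi x0 x0 = 2 * x0 - x0 * ln p + (1 - x0) * ln q - (1 - 2 * x0) * ln (p + q)).
  { assert (E1 : ln x0 = ln p - ln (p + q)) by (unfold x0; apply ln_div; lra).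
    assert (E2 : ln (1 - x0) = ln q - ln (p + q)).
    { replace (1 - x0) with (q / (p + q)) by (unfold x0; field; lra). apply ln_div; lra. }
    unfold kyfan_phi. rewrite E1, E2. ring. }
  assert (Hln : ln (p + q) <= p + q - 1).
  { pose proof (ln_le_ln_add 1 (p + q) ltac:(lra) ltac:(lra)). rewrite ln_1 in H. lra. }
  assert ((1 - 2 * x0) * ln (p + q) <= (1 - 2 * x0) * (p + q - 1)) by (apply Rmult_le_compat_l; lra).
  replace ((1 - 2 * x0) * (p + q - 1)) with (q - p - 1 + 2 * x0) in H by (unfold x0; field; lra).
  lra.
Qed.

(** * The power analogue of Alzer's inequality *)

Lemma pow_sub_pow_le_compl n u v : 0 <= u <= v -> v <= 1/2 ->
  v ^ n - u ^ n <= (1 - u) ^ n - (1 - v) ^ n.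
Proof.
  intros Huv Hv. induction n as [|n IH]; simpl; [lra|].
  assert (u ^ n <= v ^ n) by (apply pow_incr; lra).
  assert (u ^ n <= (1 - v) ^ n) by (apply pow_incr; lra).
  assert (0 <= u ^ n) by (apply pow_le; lra).
  assert (v * (v ^ n - u ^ n) <= (1 - u) * ((1 - u) ^ n - (1 - v) ^ n)).
  { apply Rle_trans with ((1 - u) * (v ^ n - u ^ n));
      [apply Rmult_le_compat_r | apply Rmult_le_compat_l]; lra. }
  assert (u ^ n * (v - u) <= (1 - v) ^ n * (v - u)) by (apply Rmult_le_compat_r; lra).
  nra.
Qed.

(* The induction step of [AM_pow_sub_rprod_le]: the point [s] joins [n] points of mean [b]. *)
Lemma two_point_pow n b s : 0 <= b <= 1/2 -> 0 <= s <= 1/2 ->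
  let a := (INR n * b + s) / (INR n + 1) in
  a ^ S n - (1 - a) ^ S n <= s * b ^ n - (1 - s) * (1 - b) ^ n.
Proof.
  intros Hb Hs a. pose proof (pos_INR n) as HN.
  set (m t := (INR n * b + t) / (INR n + 1)).
  set (f t := t * b ^ n - (1 - t) * (1 - b) ^ n - m t ^ S n + (1 - m t) ^ S n).
  assert (Hfb : f b = 0).
  { unfold f, m. replace ((INR n * b + b) / (INR n + 1)) with b by (field; lra). simpl. ring. }
  enough (f b <= f s) by (rewrite Hfb in H; unfold f, m in H; fold a in H; lra).
  apply (min_of_derive_sign f (fun t => b ^ n + (1 - b) ^ n - m t ^ n - (1 - m t) ^ n)).
  - intros t _. unfold f, m. auto_derive; auto.
    (* [auto_derive] unfolds [INR (S n)], and [field] needs the powers abstracted. *)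
    replace (match n with | 0%nat => 1 | S _ => INR n + 1 end) with (INR n + 1)
      by (destruct n; simpl; auto; lra).
    unfold Rdiv, Rminus. set (u := (INR n * b + t) * / (INR n + 1)).
    set (U := u ^ n). set (V := (1 + - u) ^ n). field. lra.
  - intros c Hc. assert (c <= m c <= b).
    { unfold m. split; apply (Rmult_le_reg_r (INR n + 1)); try lra; field_simplify; nra. }
    pose proof (pow_sub_pow_le_compl n (m c) b ltac:(lra) ltac:(lra)). lra.
  - intros c Hc. assert (b <= m c <= c).
    { unfold m. split; apply (Rmult_le_reg_r (INR n + 1)); try lra; field_simplify; nra. }
    pose proof (pow_sub_pow_le_compl n b (m c) ltac:(lra) ltac:(lra)). lra.
Qed.

Lemma AM_pow_sub_rprod_le n (x : nat -> R) : (1 <= n)%nat ->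
  (forall i, (i < n)%nat -> 0 < x i <= 1/2) ->
  AM n x ^ n - rprod x n <= (1 - AM n x) ^ n - rprod (fun i => 1 - x i) n.
Proof.
  induction n as [|n IH]; intros Hn Hx; [lia|].
  destruct (Nat.eq_dec n 0) as [->|Hn0].
  { unfold AM. simpl. rewrite Rinv_1. lra. }
  assert (Hn1 : (1 <= n)%nat) by lia.
  specialize (IH Hn1 ltac:(intros; apply Hx; lia)).
  set (b := AM n x) in *. set (s := x n).
  assert (Hs : 0 < s <= 1/2) by (apply Hx; lia).
  assert (Hb : 0 <= b <= 1/2).
  { unfold b. split.
    - left. apply AM_pos; auto. intros; apply Hx; lia.
    - rewrite <- (AM_const n (1/2) Hn1). apply AM_le. intros; apply Hx; lia. }
  assert (Hx' : forall i, (i < n)%nat -> 0 < 1 - x i) by (intros i Hi; pose proof (Hx i ltac:(lia)); lra).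
  assert (HP' : rprod (fun i => 1 - x i) n <= (1 - b) ^ n).
  { rewrite rprod_eq_GM_pow by auto. unfold b. rewrite <- (AM_one_sub n x Hn1). apply pow_incr. split.
    - left; apply GM_pos.
    - apply GM_le_AM; auto. }
  pose proof (two_point_pow n b s Hb ltac:(lra)) as Htp. simpl in Htp.
  rewrite AM_S by auto. fold b s. simpl rprod. fold s.
  assert (s * (b ^ n - rprod x n) <= s * ((1 - b) ^ n - rprod (fun i => 1 - x i) n))
    by (apply Rmult_le_compat_l; lra).
  assert (s * ((1 - b) ^ n - rprod (fun i => 1 - x i) n)
          <= (1 - s) * ((1 - b) ^ n - rprod (fun i => 1 - x i) n)) by (apply Rmult_le_compat_r; lra).
  simpl. nra.
Qed.

(** * Polar coordinates *)

Lemma polar_coords u v : 0 < v < u -> exists m d, 0 < d /\ u = exp (m + d) /\ v = exp (m - d).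
Proof.
  intros Huv. exists ((ln u + ln v) / 2), ((ln u - ln v) / 2). split; [|split].
  - pose proof (ln_increasing v u ltac:(lra) ltac:(lra)). lra.
  - rewrite <- (exp_ln u) at 1 by lra. f_equal. field.
  - rewrite <- (exp_ln v) at 1 by lra. f_equal. field.
Qed.

Lemma exp_polar_sub m d : exp (m + d) - exp (m - d) = 2 * exp m * sinh d.
Proof. unfold sinh, Rminus. rewrite !exp_plus. field. Qed.

Lemma exp_polar_pow_sub m d n :
  exp (m + d) ^ n - exp (m - d) ^ n = 2 * exp (INR n * m) * sinh (INR n * d).
Proof. rewrite !exp_pow_INR, Rmult_plus_distr_l, Rmult_minus_distr_l. apply exp_polar_sub. Qed.

Lemma exp_polar_mul m d : exp (m + d) * exp (m - d) = exp (2 * m).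
Proof. rewrite <- exp_plus. f_equal. ring. Qed.

Lemma exp_polar_div m d : exp (m + d) / exp (m - d) = exp (2 * d).
Proof. unfold Rdiv. rewrite <- exp_Ropp, <- exp_plus. f_equal. ring. Qed.

Lemma polar_sub_ratio m d m' d' : 0 < d ->
  (exp (m' + d') - exp (m' - d')) / (exp (m + d) - exp (m - d)) = exp (m' - m) * sinh d' / sinh d.
Proof.
  intros Hd. rewrite !exp_polar_sub, (exp_shift m m').
  pose proof (sinh_pos d Hd). pose proof (exp_pos m). field. lra.
Qed.

Lemma identric_pos u v : 0 < u -> 0 < identric u v.
Proof.
  intros Hu. unfold identric. destruct (Req_EM_T u v); auto.
  apply Rmult_lt_0_compat; [apply Rinv_0_lt_compat|]; apply exp_pos.
Qed.

Lemma ln_identric_polar m d : 0 < d -> ln (identric (exp (m + d)) (exp (m - d))) = m - 1 + tcoth d.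
Proof.
  intros Hd. unfold identric. destruct (Req_EM_T _ _) as [E|Hne].
  { apply exp_inv in E. lra. }
  rewrite ln_mult, ln_Rinv, ln_exp, ln_Rpower, ln_div, !ln_Rpower, !ln_exp
    by (try apply Rinv_0_lt_compat; try apply Rdiv_lt_0_compat; apply exp_pos).
  rewrite exp_polar_sub. unfold tcoth. pose proof (sinh_pos d Hd). pose proof (exp_pos m).
  replace (exp (m + d)) with (exp m * exp d) by (rewrite exp_plus; auto).
  replace (exp (m - d)) with (exp m * exp (- d)) by (rewrite <- exp_plus; auto).
  unfold cosh, sinh in *. field. lra.
Qed.

Lemma identric_log_ratio_polar m d m' d' : 0 < d -> 0 < d' -> m <> m' ->
  ln (identric (exp (m' + d')) (exp (m' - d')) / identric (exp (m + d)) (exp (m - d)))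
    / ln (sqrt (exp (m' + d') * exp (m' - d') / (exp (m + d) * exp (m - d))))
  = (m' - m + tcoth d' - tcoth d) / (m' - m).
Proof.
  intros Hd Hd' Hm. rewrite ln_div, !ln_identric_polar by (auto; apply identric_pos, exp_pos).
  rewrite !exp_polar_mul. unfold Rdiv at 2. rewrite <- exp_Ropp, <- exp_plus.
  replace (2 * m' + - (2 * m)) with (2 * (m' - m)) by ring.
  replace (exp (2 * (m' - m))) with (exp (m' - m) * exp (m' - m)) by (rewrite <- exp_plus; f_equal; ring).
  rewrite sqrt_square, ln_exp by (left; apply exp_pos). field. lra.
Qed.

Lemma ratio_lt_of_sub_lt (A G A' G' : R) : 0 < G < A -> A < A' -> A' - G' < A - G -> A' / G' < A / G.
Proof.
  intros HGA HAA' Hdiff.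
  assert (0 < (A' - A) * (A - G)) by nra.
  assert (0 < A * ((A - G) - (A' - G'))) by nra.
  apply (Rmult_lt_reg_r (G' * G)); [nra|].
  replace (A' / G' * (G' * G)) with (A' * G) by (field; nra).
  replace (A / G * (G' * G)) with (A * G') by (field; lra). nra.
Qed.

Lemma chains_of_mean_inequalities n (A G A' G' : R) : (1 <= n)%nat ->
  0 < G < A -> G' < A' -> A < G' -> A' - G' < A - G -> A ^ n - G ^ n <= A' ^ n - G' ^ n ->
  let Rr := ln (identric A' G' / identric A G) / ln (sqrt (A' * G' / (A * G))) in
  let h := INR n / 2 in
  Rmax ((A' ^ n - G' ^ n) / (A ^ n - G ^ n) * Rpower (A * G / (A' * G')) h)
       ((A' - G') / (A - G) * Rpower (A * G / (A' * G')) (1 / 2))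
    < ln (A' / G') / ln (A / G)
  /\ ln (A' / G') / ln (A / G) < (A' - G') / (A - G) * Rr
  /\ (A' - G') / (A - G) * Rr < Rmin ((A' - G') / (A - G)) Rr
  /\ Rmin ((A' - G') / (A - G)) Rr < 1
  /\ A' / G' < Rpower (A' / G') (1 / Rr)
  /\ Rpower (A' / G') (1 / Rr) < Rpower (A / G) ((A' - G') / (A - G))
  /\ Rpower (A / G) ((A' - G') / (A - G)) < A / G
  /\ A / G < Rpower (A' / G') (Rpower (A' * G' / (A * G)) h)
  /\ (A' ^ n - G' ^ n) / (A ^ n - G ^ n)
       < Rpower (A' * G') h * ln (A' / G') / (Rpower (A * G) h * ln (A / G))
  /\ Rpower (A' * G') h * ln (A' / G') / (Rpower (A * G) h * ln (A / G))
       < Rpower (A' * G' / (A * G)) h.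
Proof.
  intros Hn HGA HGA' HAG' Hdiff Hpow Rr h.
  assert (Hratio : A' / G' < A / G) by (apply ratio_lt_of_sub_lt; lra).
  destruct (polar_coords A G) as (m & d & Hd & -> & ->); [lra|].
  destruct (polar_coords A' G') as (m' & d' & Hd' & -> & ->); [lra|].
  assert (HN : 0 < INR n) by (apply lt_0_INR; lia).
  set (N := INR n) in *.
  rewrite !exp_polar_div in Hratio. apply exp_lt_inv in Hratio. apply exp_lt_inv in HAG'.
  assert (Hq1 : exp (m' - m) * sinh d' < sinh d).
  { rewrite !exp_polar_sub, (exp_shift m m') in Hdiff. pose proof (exp_pos m).
    apply (Rmult_lt_reg_l (2 * exp m)); lra. }
  assert (HP : sinh (N * d) <= exp (N * (m' - m)) * sinh (N * d')).
  { rewrite !exp_polar_pow_sub in Hpow. fold N in Hpow.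
    rewrite (exp_shift (N * m) (N * m')), <- Rmult_minus_distr_l in Hpow. pose proof (exp_pos (N * m)).
    apply (Rmult_le_reg_l (2 * exp (N * m))); lra. }
  assert (EP : (exp (m' + d') ^ n - exp (m' - d') ^ n) / (exp (m + d) ^ n - exp (m - d) ^ n)
               = exp (N * (m' - m)) * sinh (N * d') / sinh (N * d)).
  { rewrite !exp_pow_INR, !Rmult_plus_distr_l, !Rmult_minus_distr_l. fold N.
    rewrite polar_sub_ratio, <- Rmult_minus_distr_l by nra. auto. }
  unfold Rr, Rpower.
  rewrite EP, polar_sub_ratio, identric_log_ratio_polar, !exp_polar_div, !exp_polar_mul, !ln_div, !ln_exp
    by (try apply exp_pos; lra).
  replace (h * (2 * m - 2 * m')) with (- (N * (m' - m))) by (unfold h; field).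
  replace (1 / 2 * (2 * m - 2 * m')) with (- (m' - m)) by field.
  replace (h * (2 * m' - 2 * m)) with (N * (m' - m)) by (unfold h; field).
  replace (2 * d' / (2 * d)) with (d' / d) by (field; lra).
  replace (exp (h * (2 * m')) * (2 * d') / (exp (h * (2 * m)) * (2 * d)))
    with (exp (N * (m' - m)) * (d' / d)).
  2: { rewrite (exp_shift (h * (2 * m)) (h * (2 * m'))).
       replace (h * (2 * m') - h * (2 * m)) with (N * (m' - m)) by (unfold h; field).
       pose proof (exp_pos (h * (2 * m))). field. lra. }
  apply hyperbolic_chains; lra.
Qed.

Section SampleInHalfInterval.

Variables (n : nat) (x : nat -> R).
Hypothesis hn : (1 <= n)%nat.
Hypothesis hx : forall i, (i < n)%nat -> 0 < x i <= 1 / 2.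

Let hx_pos : forall i, (i < n)%nat -> 0 < x i.
Proof. intros i Hi. apply hx; auto. Qed.

Let hx'_pos : forall i, (i < n)%nat -> 0 < 1 - x i.
Proof. intros i Hi. pose proof (hx i Hi). lra. Qed.

Lemma AM_lt_half : nonconst n x -> AM n x < 1 / 2.
Proof.
  intros Hne. rewrite <- (AM_const n (1 / 2) hn). apply AM_lt; [intros; apply hx; auto|].
  destruct (nonconst_ne n x (1 / 2) Hne) as (k & Hk & Hne'). exists k. split; auto.
  pose proof (hx k Hk). lra.
Qed.

Lemma half_le_GM' : 1 / 2 <= GM' n x.
Proof.
  unfold GM'. rewrite GM_eq_exp_AM_ln, <- (exp_ln (1 / 2)) by lra. apply exp_le_exp.
  rewrite <- (AM_const n (ln (1 / 2)) hn). apply AM_le. intros i Hi.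
  pose proof (hx i Hi). apply ln_le; lra.
Qed.

Lemma GM'_lt_AM' : nonconst n x -> GM' n x < AM' n x.
Proof.
  intros (i & j & Hi & Hj & Hij). apply GM_lt_AM; auto.
  exists i, j. repeat split; auto. intro E. apply Hij. lra.
Qed.

Lemma AM_pow_sub_GM_pow_le : AM n x ^ n - GM n x ^ n <= AM' n x ^ n - GM' n x ^ n.
Proof.
  unfold AM', GM'. rewrite <- !rprod_eq_GM_pow, AM_one_sub by auto.
  apply AM_pow_sub_rprod_le; auto.
Qed.

End SampleInHalfInterval.

Theorem theorem4p2 (n : nat) (x : nat -> R)
  (hn : (1 <= n)%nat)
  (hx : forall i, (i < n)%nat -> 0 < x i <= 1 / 2)
  (hne : exists i j, (i < n)%nat /\ (j < n)%nat /\ x i <> x j) :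
  let A := AM n x in
  let G := GM n x in
  let A' := AM' n x in
  let G' := GM' n x in
  let Rr := ln (identric A' G' / identric A G) / ln (sqrt (A' * G' / (A * G))) in
  let h := INR n / 2 in
  Rmax ((A' ^ n - G' ^ n) / (A ^ n - G ^ n) * Rpower (A * G / (A' * G')) h)
       ((A' - G') / (A - G) * Rpower (A * G / (A' * G')) (1 / 2))
    < ln (A' / G') / ln (A / G)
  /\ ln (A' / G') / ln (A / G) < (A' - G') / (A - G) * Rr
  /\ (A' - G') / (A - G) * Rr < Rmin ((A' - G') / (A - G)) Rr
  /\ Rmin ((A' - G') / (A - G)) Rr < 1
  /\ A' / G' < Rpower (A' / G') (1 / Rr)
  /\ Rpower (A' / G') (1 / Rr) < Rpower (A / G) ((A' - G') / (A - G))
  /\ Rpower (A / G) ((A' - G') / (A - G)) < A / G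
  /\ A / G < Rpower (A' / G') (Rpower (A' * G' / (A * G)) h)
  /\ (A' ^ n - G' ^ n) / (A ^ n - G ^ n)
       < Rpower (A' * G') h * ln (A' / G') / (Rpower (A * G) h * ln (A / G))
  /\ Rpower (A' * G') h * ln (A' / G') / (Rpower (A * G) h * ln (A / G))
       < Rpower (A' * G' / (A * G)) h.
Proof.
  intros A G A' G'.
  assert (HG : 0 < G) by apply GM_pos.
  assert (HGA : G < A) by (apply GM_lt_AM; auto; intros; apply hx; auto).
  assert (HA : A < 1 / 2) by (apply AM_lt_half; auto).
  assert (HG' : 1 / 2 <= G') by (apply half_le_GM'; auto).
  apply chains_of_mean_inequalities; [exact hn | split; assumption | | | |].
  - apply GM'_lt_AM'; auto.
  - apply Rlt_le_trans with (1 / 2); assumption.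
  - apply additive_ky_fan; auto. apply Rlt_trans with A; [|apply Rlt_le_trans with (1 / 2)]; assumption.
  - apply AM_pow_sub_GM_pow_le; auto.
Qed.
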